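(* For $\sigma>0$ let $\mathcal H_\sigma$ denote the reproducing kernel Hilbert space of the Gaussian kernel $k_\sigma(x,y) = \exp(-\|x-y\|^2/(2\sigma^2))$ on $\mathbb R^d$, with norm $\|\cdot\|_\sigma$. If $f, g \in \mathcal H_\sigma$, then the pointwise product $fg$ satisfies $\|fg\|_{\sigma/\sqrt2} \leq \|f\|_\sigma \|g\|_\sigma$. *)

From HB Require Import structures.
From mathcomp Require Import all_boot all_order all_algebra.
From mathcomp Require Import all_classical all_reals all_analysis.
Set Implicit Arguments. Unset Strict Implicit. Unset Printing Implicit Defensive.
Import Order.TTheory GRing.Theory Num.Theory.
Import numFieldNormedType.Exports.
Local Open Scope classical_set_scope.
Local Open Scope ring_scope.

Section GaussRKHS.
Variables (R : realType) (d : nat).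

Definition sqdist (x y : 'rV[R]_d) : R := \sum_(i < d) (x 0 i - y 0 i) ^+ 2.

Definition gauss_kernel (s : R) (x y : 'rV[R]_d) : R :=
  expR (- (sqdist x y / (2 * s ^+ 2))).

(* Elements of the pre-Hilbert space H_0 = span {k_s(., x)}:
   finite formal combinations sum_i c_i k_s(., x_i). *)
Definition pre_elt := seq (R * 'rV[R]_d).

Definition pre_eval (s : R) (h : pre_elt) (x : 'rV[R]_d) : R :=
  \sum_(p <- h) p.1 * gauss_kernel s p.2 x.

Definition pre_norm2 (s : R) (h : pre_elt) : R :=
  \sum_(p <- h) \sum_(q <- h) p.1 * q.1 * gauss_kernel s p.2 q.2.

Definition pre_sub (h1 h2 : pre_elt) : pre_elt :=
  h1 ++ map (fun p => (- p.1, p.2)) h2.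

(* Aronszajn completion: u is an H_0-Cauchy sequence converging pointwise to f *)
Definition represents (s : R) (u : nat -> pre_elt) (f : 'rV[R]_d -> R) : Prop :=
  (forall e : R, 0 < e -> exists N : nat, forall m n : nat,
       (N <= m)%N -> (N <= n)%N -> pre_norm2 s (pre_sub (u m) (u n)) <= e)
  /\ (forall x, (fun n => pre_eval s (u n) x) @ \oo --> f x).

Definition in_rkhs (s : R) (f : 'rV[R]_d -> R) : Prop :=
  exists u, represents s u f.

(* RKHS norm: limit of the H_0-norms of an approximating Cauchy sequence
   (independent of the choice; we take the infimum over all choices). *)
Definition rkhs_norm (s : R) (f : 'rV[R]_d -> R) : R :=
  inf [set r : R | exists u, represents s u f /\
         (fun n => Num.sqrt (pre_norm2 s (u n))) @ \oo --> r].

End GaussRKHS.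

From HB Require Import structures.
From mathcomp Require Import all_boot all_order all_algebra.
From mathcomp Require Import all_classical all_reals all_analysis.
From mathcomp Require Import ring lra.
Import Order.TTheory GRing.Theory Num.Theory.
Import numFieldNormedType.Exports.
Set Implicit Arguments. Unset Strict Implicit.
Local Open Scope classical_set_scope.
Local Open Scope ring_scope.

(* Since k_s(x,z) k_s(y,z) = k_(sqrt 2 s)(x,y) k_(s/sqrt 2)((x+y)/2, z), the
   pointwise product of two finite kernel expansions is again a finite
   expansion, for the kernel k_(s/sqrt 2), and its norm is at most the
   product of the norms. This estimate passes to Cauchy sequences, hence to
   the completion. Positive semi-definiteness of the Gaussian kernels, needed
   for Cauchy-Schwarz, comes from the exponential series of the linear kernel. *)

Lemma sqr_le_of_quadratic_ge0 (R : realFieldType) (a b c : R) :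
  0 <= c -> (forall t, 0 <= a + 2 * t * b + t ^+ 2 * c) -> b ^+ 2 <= a * c.
Proof.
move=> c_ge0 quad_ge0.
have := @deg_le2_poly_delta_ge0 R (Poly [:: a; 2 * b; c]) (size_Poly _).
rewrite !coef_Poly /= => /(_ c_ge0 _).
have -> : (2 * b) ^+ 2 - 4 * c * a = 4 * (b ^+ 2 - a * c) by ring.
rewrite pmulr_rle0 ?subr_le0 //; apply=> t.
by rewrite !horner_cons hornerC; have := quad_ge0 t; congr (0 <= _); ring.
Qed.

Section KernelForm.
Variables (R : rcfType) (T : Type) (K : T -> T -> R).
Implicit Types (a b h : seq (R * T)) (t : R).

Definition kdot a b : R := \sum_(p <- a) \sum_(q <- b) p.1 * q.1 * K p.2 q.2.
Definition keval h (x : T) : R := \sum_(p <- h) p.1 * K p.2 x.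
Definition knorm h : R := Num.sqrt (kdot h h).
Definition kscale t h := [seq (t * p.1, p.2) | p <- h].
Definition kopp h := [seq (- p.1, p.2) | p <- h].
Definition psd_kernel := forall h, 0 <= kdot h h.

Lemma knorm_ge0 h : 0 <= knorm h. Proof. exact: sqrtr_ge0. Qed.

Lemma kdot_catl a b h : kdot (a ++ b) h = kdot a h + kdot b h.
Proof. by rewrite /kdot big_cat. Qed.

Lemma kdot_catr a b h : kdot h (a ++ b) = kdot h a + kdot h b.
Proof. by rewrite /kdot -big_split; apply: eq_bigr => p _; rewrite big_cat. Qed.

Lemma kdot_scalel t a b : kdot (kscale t a) b = t * kdot a b.
Proof.
rewrite /kdot big_map mulr_sumr; apply: eq_bigr => p _; rewrite mulr_sumr.
by apply: eq_bigr => q _ /=; ring.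
Qed.

Lemma keval_cat a b x : keval (a ++ b) x = keval a x + keval b x.
Proof. by rewrite /keval big_cat. Qed.

Lemma keval_opp h x : keval (kopp h) x = - keval h x.
Proof. by rewrite /keval big_map -sumrN; apply: eq_bigr => p _ /=; ring. Qed.

Hypothesis K_sym : forall x y, K x y = K y x.

Lemma kdot_sym a b : kdot a b = kdot b a.
Proof.
rewrite /kdot exchange_big; apply: eq_bigr => p _; apply: eq_bigr => q _.
by rewrite K_sym; ring.
Qed.

Lemma kdot_scaler t a b : kdot a (kscale t b) = t * kdot a b.
Proof. by rewrite kdot_sym kdot_scalel kdot_sym. Qed.

Lemma kdot_kevalE a b : kdot a b = \sum_(p <- a) p.1 * keval b p.2.
Proof.
apply: eq_bigr => p _; rewrite mulr_sumr; apply: eq_bigr => q _.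
by rewrite K_sym; ring.
Qed.

Lemma eq_kdot_keval a b : keval a =1 keval b -> kdot a a = kdot b b.
Proof.
move=> eq_ab; rewrite kdot_kevalE; under eq_bigr => p _ do rewrite eq_ab.
rewrite -kdot_kevalE kdot_sym kdot_kevalE; under eq_bigr => p _ do rewrite eq_ab.
by rewrite -kdot_kevalE.
Qed.

Lemma eq_knorm_keval a b : keval a =1 keval b -> knorm a = knorm b.
Proof. by move=> /eq_kdot_keval; rewrite /knorm => ->. Qed.

Hypothesis K_psd : psd_kernel.

Lemma kdot_Cauchy_Schwarz a b : kdot a b ^+ 2 <= kdot a a * kdot b b.
Proof.
apply: sqr_le_of_quadratic_ge0 => // t; have := K_psd (a ++ kscale t b).
rewrite kdot_catl !kdot_catr kdot_scalel !kdot_scaler kdot_scalel (kdot_sym b a).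
by congr (0 <= _); ring.
Qed.

Lemma kdot_le_knorm a b : kdot a b <= knorm a * knorm b.
Proof.
rewrite /knorm -sqrtrM ?K_psd // (le_trans (ler_norm _)) // -sqrtr_sqr.
by rewrite ler_wsqrtr // kdot_Cauchy_Schwarz.
Qed.

Lemma knorm_cat a b : knorm (a ++ b) <= knorm a + knorm b.
Proof.
have := kdot_le_knorm a b; rewrite /knorm => ab_le.
rewrite -[leRHS]ger0_norm ?addr_ge0 ?sqrtr_ge0 // -sqrtr_sqr ler_wsqrtr //.
rewrite sqrrD !sqr_sqrtr ?K_psd // kdot_catl !kdot_catr (kdot_sym b a) mulr2n.
lra.
Qed.

Lemma knorm_le_sub a b : knorm a <= knorm (a ++ kopp b) + knorm b.
Proof.
rewrite (@eq_knorm_keval a (a ++ kopp b ++ b)) ?catA ?knorm_cat // => x.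
by rewrite !keval_cat keval_opp subrK.
Qed.

End KernelForm.

Lemma eq_psd_kernel (R : rcfType) (T : Type) (K L : T -> T -> R) :
  (forall x y, K x y = L x y) -> psd_kernel K -> psd_kernel L.
Proof. by move=> eqKL; have -> : L = K by apply/funext=> x; apply/funext=> y. Qed.

Lemma psd_kernel_conj (R : rcfType) (T : Type) (K : T -> T -> R) (A : T -> R) :
  psd_kernel K -> psd_kernel (fun x y => A x * K x y * A y).
Proof.
move=> K_psd h; have := K_psd [seq (p.1 * A p.2, p.2) | p <- h].
rewrite /kdot big_map; under eq_bigr => p _ do rewrite big_map.
by congr (0 <= _); apply: eq_bigr => p _; apply: eq_bigr => q _ /=; ring.
Qed.

Lemma psd_kernel_sum (R : rcfType) (T I : Type) (r : seq I) (c : I -> R)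
    (K : I -> T -> T -> R) :
  (forall i, 0 <= c i) -> (forall i, psd_kernel (K i)) ->
  psd_kernel (fun x y => \sum_(i <- r) c i * K i x y).
Proof.
move=> c_ge0 K_psd h.
have -> : kdot (fun x y => \sum_(i <- r) c i * K i x y) h h =
          \sum_(i <- r) c i * kdot (K i) h h.
  rewrite /kdot; under [RHS]eq_bigr => i _ do rewrite mulr_sumr.
  rewrite [RHS]exchange_big; apply: eq_bigr => p _.
  under [RHS]eq_bigr => i _ do rewrite mulr_sumr.
  rewrite [RHS]exchange_big; apply: eq_bigr => q _ /=.
  by rewrite mulr_sumr; apply: eq_bigr => i _; ring.
by apply: sumr_ge0 => i _; exact: mulr_ge0 (c_ge0 i) (K_psd i h).
Qed.

Lemma kdot_cvg (R : realType) (T : Type) (K_ : nat -> T -> T -> R)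
    (K : T -> T -> R) a b :
  (forall x y, K_ n x y @[n --> \oo] --> K x y) ->
  kdot (K_ n) a b @[n --> \oo] --> kdot K a b.
Proof.
move=> cvgK; apply: cvg_big => [|p _]; first exact: add_continuous.
apply: cvg_big => [|q _]; first exact: add_continuous.
exact: cvgMl_tmp.
Qed.

Section FeatureKernels.
Variables (R : realType) (T : Type) (I : finType) (v : T -> I -> R).

Definition feature_dot (x y : T) : R := \sum_i v x i * v y i.

(* [feature_dot ^+ n] is the Gram kernel of the tensor-power features
   [x |-> (\prod_k v x (f k))_f], [f : 'I_n -> I]. *)
Lemma psd_feature_dotX n : psd_kernel (fun x y => feature_dot x y ^+ n).
Proof.
move=> h; pose X (f : {ffun 'I_n -> I}) := \sum_(p <- h) p.1 * \prod_k v p.2 (f k).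
have -> : kdot (fun x y => feature_dot x y ^+ n) h h = \sum_f X f * X f.
  under [RHS]eq_bigr => f _ do rewrite /X mulr_suml; rewrite [RHS]exchange_big /=.
  apply: eq_bigr => p _; under [RHS]eq_bigr => f _ do rewrite mulr_sumr.
  rewrite [RHS]exchange_big /=; apply: eq_bigr => q _.
  rewrite /feature_dot -[n in _ ^+ n]card_ord -prodr_const bigA_distr_bigA mulr_sumr.
  by apply: eq_bigr => f _; rewrite big_split /=; ring.
by apply: sumr_ge0 => f _; rewrite -expr2 sqr_ge0.
Qed.

Lemma psd_expR_feature_dot t :
  0 <= t -> psd_kernel (fun x y => expR (t * feature_dot x y)).
Proof.
move=> t_ge0 h.
pose K_ N x y := \sum_(0 <= k < N) (t ^+ k / k`!%:R) * feature_dot x y ^+ k.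
have cvgK : kdot (K_ N) h h @[N --> \oo] -->
            kdot (fun x y => expR (t * feature_dot x y)) h h.
  apply: kdot_cvg => x y; rewrite /K_.
  under eq_fun => N do under eq_bigr => k _ do rewrite mulrAC -exprMn.
  exact: is_cvg_series_exp_coeff.
rewrite -(cvg_lim _ cvgK) //; apply: limr_ge; first exact: cvgP cvgK.
apply: nearW => N; apply: psd_kernel_sum => [k|k]; last exact: psd_feature_dotX.
by rewrite divr_ge0 // exprn_ge0.
Qed.

Lemma psd_gauss_features c :
  0 <= c -> psd_kernel (fun x y => expR (- (c * \sum_i (v x i - v y i) ^+ 2))).
Proof.
move=> c_ge0; pose A x := expR (- (c * \sum_i v x i ^+ 2)).
apply: (@eq_psd_kernel _ _ (fun x y => A x * expR (2 * c * feature_dot x y) * A y)).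
  move=> x y; rewrite /A -!expRD; congr expR.
  rewrite /feature_dot !mulr_sumr -!sumrN -!big_split /=.
  by apply: eq_bigr => i _; ring.
by apply/psd_kernel_conj/psd_expR_feature_dot; rewrite mulr_ge0.
Qed.

End FeatureKernels.

Section TensorKernel.
Variables (R : rcfType) (T : Type) (K L : T -> T -> R).
Implicit Types (a b h : seq (R * T)).

Definition tensor_kernel (u w : T * T) : R := K u.1 w.1 * L u.2 w.2.

Definition tensor_elt a b : seq (R * (T * T)) :=
  [seq (p.1 * q.1, (p.2, q.2)) | p <- a, q <- b].

Definition diag_elt h : seq (R * (T * T)) := [seq (p.1, (p.2, p.2)) | p <- h].

Lemma tensor_kernel_sym :
  (forall x y, K x y = K y x) -> (forall x y, L x y = L y x) ->
  forall u w, tensor_kernel u w = tensor_kernel w u.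
Proof. by move=> K_sym L_sym u w; rewrite /tensor_kernel K_sym L_sym. Qed.

Lemma kdot_tensor a b :
  kdot tensor_kernel (tensor_elt a b) (tensor_elt a b) = kdot K a a * kdot L b b.
Proof.
rewrite /kdot big_allpairs_dep.
under eq_bigr => p _ do under eq_bigr => q _ do rewrite big_allpairs_dep.
rewrite mulr_suml; apply: eq_bigr => p _ /=.
rewrite [RHS]mulr_suml; under [RHS]eq_bigr => p' _ do rewrite mulr_sumr.
under [RHS]eq_bigr => p' _ do under eq_bigr => q _ do rewrite mulr_sumr.
rewrite [RHS]exchange_big /=; apply: eq_bigr => q _; apply: eq_bigr => p' _.
by apply: eq_bigr => q' _ /=; rewrite /tensor_kernel /=; ring.
Qed.

Lemma kdot_diag h :
  kdot tensor_kernel (diag_elt h) (diag_elt h) = kdot (fun x y => K x y * L x y) h h.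
Proof. by rewrite /kdot big_map; apply: eq_bigr => p _; rewrite big_map. Qed.

Lemma kdot_tensor_diag a b h :
  kdot tensor_kernel (tensor_elt a b) (diag_elt h) =
  \sum_(r <- h) r.1 * (keval K a r.2 * keval L b r.2).
Proof.
rewrite /kdot big_allpairs_dep /=.
under eq_bigr => p _ do rewrite exchange_big big_map /=.
rewrite exchange_big; apply: eq_bigr => r _ /=.
rewrite /keval mulr_suml mulr_sumr; apply: eq_bigr => p _; rewrite !mulr_sumr.
by apply: eq_bigr => q _; rewrite /tensor_kernel /=; ring.
Qed.

End TensorKernel.

Section GaussKernel.
Variables (R : realType) (d : nat).
Implicit Types (s : R) (x y z : 'rV[R]_d) (a b h : pre_elt R d).

Lemma pre_evalE s h x : pre_eval s h x = keval (gauss_kernel s) h x.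
Proof. by []. Qed.

Lemma pre_norm2E s h : pre_norm2 s h = kdot (gauss_kernel s) h h. Proof. by []. Qed.

Lemma pre_subE a b : pre_sub a b = a ++ kopp b. Proof. by []. Qed.

Lemma sqdist_sym x y : sqdist x y = sqdist y x.
Proof. by apply: eq_bigr => i _; rewrite -sqrrN opprB. Qed.

Lemma gauss_kernel_sym s x y : gauss_kernel s x y = gauss_kernel s y x.
Proof. by rewrite /gauss_kernel sqdist_sym. Qed.

Lemma psd_gauss_kernel s : psd_kernel (@gauss_kernel R d s).
Proof.
have c_ge0 : 0 <= (2 * s ^+ 2)^-1 by rewrite invr_ge0 mulr_ge0 ?sqr_ge0.
apply: (eq_psd_kernel _ (psd_gauss_features (fun x : 'rV[R]_d => x 0) c_ge0)) => x y.
by rewrite /gauss_kernel mulrC.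
Qed.

Lemma psd_gauss_tensor s :
  psd_kernel (tensor_kernel (@gauss_kernel R d s) (@gauss_kernel R d s)).
Proof.
have c_ge0 : 0 <= (2 * s ^+ 2)^-1 by rewrite invr_ge0 mulr_ge0 ?sqr_ge0.
pose v (u : 'rV[R]_d * 'rV[R]_d) (i : 'I_d + 'I_d) :=
  match i with inl j => u.1 0 j | inr j => u.2 0 j end.
apply: (eq_psd_kernel _ (psd_gauss_features v c_ge0)) => u w.
rewrite /tensor_kernel /gauss_kernel /sqdist big_sumType /= -expRD.
by rewrite mulrDr opprD ![_^-1 * _]mulrC.
Qed.

Definition midpoint x y : 'rV[R]_d := 2^-1 *: (x + y).

Lemma gauss_kernel_mul s x y z : s != 0 ->
  gauss_kernel s x z * gauss_kernel s y z =
  gauss_kernel (s * Num.sqrt 2) x y * gauss_kernel (s / Num.sqrt 2) (midpoint x y) z.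
Proof.
move=> s_neq0; rewrite /gauss_kernel -!expRD !exprMn exprVn sqr_sqrtr //.
congr expR; rewrite /sqdist !mulr_suml -!sumrN -!big_split /=.
by apply: eq_bigr => i _; rewrite /midpoint !mxE; field; rewrite s_neq0.
Qed.

Lemma gauss_kernel_sqr s x y :
  gauss_kernel s x y ^+ 2 = gauss_kernel (s / Num.sqrt 2) x y.
Proof.
rewrite /gauss_kernel expr2 -expRD exprMn exprVn sqr_sqrtr //; congr expR.
have [->|s_neq0] := eqVneq s 0; last by field; rewrite s_neq0.
by rewrite !(expr0n, mul0r, mulr0, invr0, oppr0, addr0).
Qed.

Definition gauss_prod s a b : pre_elt R d :=
  [seq (p.1 * q.1 * gauss_kernel (s * Num.sqrt 2) p.2 q.2, midpoint p.2 q.2)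
  | p <- a, q <- b].

Lemma keval_gauss_prod s a b z : s != 0 ->
  keval (gauss_kernel (s / Num.sqrt 2)) (gauss_prod s a b) z =
  keval (gauss_kernel s) a z * keval (gauss_kernel s) b z.
Proof.
move=> s_neq0; rewrite /keval big_allpairs_dep mulr_suml; apply: eq_bigr => p _.
rewrite mulr_sumr; apply: eq_bigr => q _ /=.
by rewrite -!mulrA -gauss_kernel_mul //; ring.
Qed.

(* Compare [P := gauss_prod s a b], lifted to the diagonal of the tensor
   square, with [tensor_elt a b]: since [k_s ^+ 2 = k_(s/sqrt 2)] the lift
   has norm [|P|], and by the reproducing property its inner product with
   [tensor_elt a b] is [|P|^2]. Cauchy-Schwarz gives [|P|^4 <= |a|^2 |b|^2 |P|^2]. *)
Lemma kdot_gauss_prod_le s a b : s != 0 ->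
  kdot (gauss_kernel (s / Num.sqrt 2)) (gauss_prod s a b) (gauss_prod s a b) <=
  kdot (gauss_kernel s) a a * kdot (gauss_kernel s) b b.
Proof.
move=> s_neq0; set P := gauss_prod s a b; set Q := kdot _ P P.
have Q_ge0 : 0 <= Q := psd_gauss_kernel _ P.
have ab_ge0 : 0 <= kdot (gauss_kernel s) a a * kdot (gauss_kernel s) b b.
  by rewrite mulr_ge0 ?psd_gauss_kernel.
have diag_norm :
    kdot (tensor_kernel (gauss_kernel s) (gauss_kernel s)) (diag_elt P) (diag_elt P) = Q.
  rewrite kdot_diag; apply: eq_bigr => p _; apply: eq_bigr => q _.
  by rewrite -expr2 gauss_kernel_sqr.
have tensor_diag :
    kdot (tensor_kernel (gauss_kernel s) (gauss_kernel s)) (tensor_elt a b) (diag_elt P) = Q.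
  rewrite kdot_tensor_diag /Q kdot_kevalE; last exact: gauss_kernel_sym.
  by apply: eq_bigr => r _; rewrite /P keval_gauss_prod.
have := kdot_Cauchy_Schwarz (tensor_kernel_sym (@gauss_kernel_sym s) (@gauss_kernel_sym s))
  (psd_gauss_tensor s) (tensor_elt a b) (diag_elt P).
rewrite kdot_tensor diag_norm tensor_diag expr2 => CS.
move: Q_ge0; rewrite le_eqVlt => /predU1P[<- //|Q_gt0].
by rewrite -(ler_pM2r Q_gt0).
Qed.

Lemma knorm_gauss_prod_le s a b : s != 0 ->
  knorm (gauss_kernel (s / Num.sqrt 2)) (gauss_prod s a b) <=
  knorm (gauss_kernel s) a * knorm (gauss_kernel s) b.
Proof.
move=> s_neq0; rewrite /knorm -sqrtrM ?psd_gauss_kernel //.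
by rewrite ler_wsqrtr ?kdot_gauss_prod_le.
Qed.

End GaussKernel.

Lemma cauchy_seq_cvgn (R : realType) (u : nat -> R) :
  (forall e : R, 0 < e -> exists N : nat, forall m n : nat,
     (N <= m)%N -> (N <= n)%N -> `|u m - u n| <= e) -> cvgn u.
Proof.
move=> u_cauchy; apply/cauchy_cvgP/cauchy_exP => e e_gt0.
have [N uN] := u_cauchy (e / 2) (divr_gt0 e_gt0 (ltr0Sn _ 1)).
exists (u N), N => // n /= Nn; rewrite -ball_normE /ball_ /=.
by apply: le_lt_trans (uN N n (leqnn N) Nn) _; rewrite ltr_pdivrMr // ltr_pMr // ltr1n.
Qed.

Lemma le_mulr_inf (R : realType) (E : set R) (c t : R) :
  E !=set0 -> 0 <= t -> (forall r, E r -> c <= t * r) -> c <= t * inf E.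
Proof.
move=> [r0 Er0] t_ge0 c_le; have [t_eq0|t_neq0] := eqVneq t 0.
  by have := c_le r0 Er0; rewrite t_eq0 !mul0r.
have t_gt0 : 0 < t by rewrite lt_def t_neq0.
rewrite -ler_pdivrMl //; apply: lb_le_inf; first by exists r0.
by move=> r Er; rewrite ler_pdivrMl // c_le.
Qed.

Lemma le_mul_inf (R : realType) (E F : set R) (c : R) :
  E !=set0 -> F !=set0 -> (forall r, E r -> 0 <= r) -> (forall r, F r -> 0 <= r) ->
  (forall r1 r2, E r1 -> F r2 -> c <= r1 * r2) -> c <= inf E * inf F.
Proof.
move=> [r1 Er1] F_neq0 E_ge0 F_ge0 c_le.
have infE_ge0 : 0 <= inf E by apply: lb_le_inf => //; exists r1.
apply: le_mulr_inf => // r2 Fr2; rewrite mulrC; apply: le_mulr_inf => //.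
  by exists r1.
by apply: F_ge0.
by move=> r Er; rewrite mulrC c_le.
Qed.

Section Completion.
Variables (R : realType) (d : nat).
Implicit Types (s : R) (a b : pre_elt R d) (u v : nat -> pre_elt R d)
  (f g : 'rV[R]_d -> R).

Lemma knorm_gauss_le_sub s a b :
  knorm (gauss_kernel s) a <=
  knorm (gauss_kernel s) (pre_sub a b) + knorm (gauss_kernel s) b.
Proof. exact: knorm_le_sub (@gauss_kernel_sym R d s) (psd_gauss_kernel s) a b. Qed.

Lemma knorm_gauss_prod_sub s a a' b b' : s != 0 ->
  knorm (gauss_kernel (s / Num.sqrt 2))
    (pre_sub (gauss_prod s a b) (gauss_prod s a' b')) <=
  knorm (gauss_kernel s) (pre_sub a a') * knorm (gauss_kernel s) b +
  knorm (gauss_kernel s) a' * knorm (gauss_kernel s) (pre_sub b b').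
Proof.
move=> s_neq0.
rewrite (@eq_knorm_keval _ _ _ (@gauss_kernel_sym R d _) _
  (gauss_prod s (pre_sub a a') b ++ gauss_prod s a' (pre_sub b b'))); last first.
  move=> x; rewrite !pre_subE !keval_cat !keval_opp !(keval_gauss_prod _ _ _ s_neq0).
  by rewrite !keval_cat !keval_opp; ring.
apply: le_trans (knorm_cat (@gauss_kernel_sym R d _) (psd_gauss_kernel _) _ _) _.
by apply: lerD; apply: knorm_gauss_prod_le.
Qed.

Lemma represents_knorm_cauchy s u f : represents s u f ->
  forall e : R, 0 < e -> exists N : nat, forall m n : nat,
    (N <= m)%N -> (N <= n)%N -> knorm (gauss_kernel s) (pre_sub (u m) (u n)) <= e.
Proof.
move=> [u_cauchy _] e e_gt0; have [N uN] := u_cauchy (e ^+ 2) (exprn_gt0 2 e_gt0).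
exists N => m n Nm Nn; rewrite /knorm -[e](ger0_norm (ltW e_gt0)) -sqrtr_sqr.
by apply: ler_wsqrtr; apply: uN.
Qed.

Lemma represents_knorm_cvg s u f : represents s u f ->
  cvgn (fun n => knorm (gauss_kernel s) (u n)).
Proof.
move=> /represents_knorm_cauchy u_cauchy; apply: cauchy_seq_cvgn => e e_gt0.
have [N uN] := u_cauchy e e_gt0; exists N => m n Nm Nn.
have := knorm_gauss_le_sub s (u m) (u n); have := knorm_gauss_le_sub s (u n) (u m).
have := uN m n Nm Nn; have := uN n m Nn Nm.
by rewrite ler_norml; lra.
Qed.

Lemma represents_knorm_bounded s u f : represents s u f ->
  exists N B, 0 < B /\ forall n, (N <= n)%N -> knorm (gauss_kernel s) (u n) <= B.
Proof.
move=> /represents_knorm_cauchy /(_ 1 ltr01) [N uN].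
exists N, (1 + knorm (gauss_kernel s) (u N)); split.
  by rewrite ltr_wpDr ?knorm_ge0.
move=> n Nn; apply: le_trans (knorm_gauss_le_sub s (u n) (u N)) _.
by rewrite lerD2r uN.
Qed.

Lemma represents_mul s u v f g : s != 0 ->
  represents s u f -> represents s v g ->
  represents (s / Num.sqrt 2) (fun n => gauss_prod s (u n) (v n)) (fun x => f x * g x).
Proof.
move=> s_neq0 u_f v_g; split; last first.
  move=> x; under eq_fun => n do rewrite pre_evalE (keval_gauss_prod _ _ _ s_neq0).
  exact: cvgM (u_f.2 x) (v_g.2 x).
move=> e e_gt0; have sqrte_gt0 : 0 < Num.sqrt e by rewrite sqrtr_gt0.
have [Nu [Bu [Bu_gt0 uBu]]] := represents_knorm_bounded u_f.
have [Nv [Bv [Bv_gt0 vBv]]] := represents_knorm_bounded v_g.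
pose delta := Num.sqrt e / (Bu + Bv).
have delta_gt0 : 0 < delta by rewrite divr_gt0 // addr_gt0.
have [Nu' uN] := represents_knorm_cauchy u_f delta_gt0.
have [Nv' vN] := represents_knorm_cauchy v_g delta_gt0.
exists (maxn (maxn Nu Nv) (maxn Nu' Nv')) => m n.
rewrite !geq_max => /and3P[/andP[mu mv] mu' mv'] /and3P[/andP[nu nv] nu' nv'].
rewrite pre_norm2E -ler_sqrt; last exact: ltW.
apply: le_trans (knorm_gauss_prod_sub _ _ _ _ s_neq0) _.
have du := uN m n mu' nu'; have dv := vN m n mv' nv'.
have := ler_pM (knorm_ge0 _ _) (knorm_ge0 _ _) du (vBv m mv).
have := ler_pM (knorm_ge0 _ _) (knorm_ge0 _ _) (uBu n nu) dv.
have : delta * Bv + Bu * delta = Num.sqrt e.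
  by rewrite /delta; field; rewrite gt_eqF ?addr_gt0.
lra.
Qed.

Definition norm_limits s f : set R :=
  [set r | exists u, represents s u f /\
           (fun n => knorm (gauss_kernel s) (u n)) @ \oo --> r].

Lemma rkhs_normE s f : rkhs_norm s f = inf (norm_limits s f). Proof. by []. Qed.

Lemma norm_limits_ge0 s f r : norm_limits s f r -> 0 <= r.
Proof. by move=> [u [_ /cvgr_to_ge]]; apply; apply: nearW => n; apply: knorm_ge0. Qed.

Lemma norm_limits_lim s u f : represents s u f ->
  norm_limits s f (limn (fun n => knorm (gauss_kernel s) (u n))).
Proof. by move=> u_f; exists u; split=> //; apply: represents_knorm_cvg u_f. Qed.

Lemma rkhs_norm_mul_le s u v f g (r1 r2 : R) : s != 0 ->
  represents s u f -> (fun n => knorm (gauss_kernel s) (u n)) @ \oo --> r1 ->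
  represents s v g -> (fun n => knorm (gauss_kernel s) (v n)) @ \oo --> r2 ->
  rkhs_norm (s / Num.sqrt 2) (fun x => f x * g x) <= r1 * r2.
Proof.
move=> s_neq0 u_f u_r1 v_g v_r2; have w_fg := represents_mul s_neq0 u_f v_g.
apply: le_trans (ge_inf _ (norm_limits_lim w_fg)) _.
  by exists 0 => r /norm_limits_ge0.
apply: ler_cvg_to (represents_knorm_cvg w_fg) (cvgM u_r1 v_r2) _.
by apply: nearW => n; apply: knorm_gauss_prod_le.
Qed.

End Completion.

Theorem theorem2 (R : realType) (d : nat) (s : R) (hs : 0 < s)
    (f g : 'rV[R]_d -> R) :
  in_rkhs s f -> in_rkhs s g ->
  in_rkhs (s / Num.sqrt 2) (fun x => f x * g x) /\
  rkhs_norm (s / Num.sqrt 2) (fun x => f x * g x)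
    <= rkhs_norm s f * rkhs_norm s g.
Proof.
move=> [u u_f] [v v_g]; have s_neq0 : s != 0 by rewrite gt_eqF.
split; first by exists (fun n => gauss_prod s (u n) (v n)); apply: represents_mul.
rewrite [rkhs_norm s f]rkhs_normE [rkhs_norm s g]rkhs_normE.
apply: le_mul_inf => [||r /norm_limits_ge0 //|r /norm_limits_ge0 //|].
- by eexists; apply: norm_limits_lim u_f.
- by eexists; apply: norm_limits_lim v_g.
move=> r1 r2 [u1 [u1_f u1_r1]] [v1 [v1_g v1_r2]].
exact: rkhs_norm_mul_le s_neq0 u1_f u1_r1 v1_g v1_r2.
Qed.
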